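(* Let $\gamma_\infty=\lim_{\epsilon\to+\infty}\gamma(\epsilon)=E\{Z_i\mid A_i=0,Y_i=1\}-E\{Z_i\mid A_i=1,Y_i=1\}$. If $\gamma_\infty\neq 0$ (i.e. the non-private algorithm $\mathscr{A}$ is not $0$-fair), then there exists $\hat\epsilon\in(0,+\infty)$ such that $|\gamma(\epsilon)|<|\gamma_\infty|$ for all $\epsilon\in(0,\hat\epsilon)$.
   Context: There are $n$ individuals indexed by $\mathcal{N}=\{1,\dots,n\}$. Individual $i$ is described by a random tuple $(X_i,A_i,Y_i)$, with features $X_i\in\mathcal{X}$, protected attribute $A_i\in\{0,1\}$ and qualification state $Y_i\in\{0,1\}$; the tuples are i.i.d. with a common distribution $\mathsf{F}$. A fixed function $r:\mathcal{X}\to\mathcal{R}$ is given, with $\mathcal{R}\subset[0,1]$ finite, and $R_i=r(X_i)$. Conditioning events $\{A_i=a,Y_i=1\}$ are assumed to have positive probability. For $\epsilon\ge0$, define $Z_{i,\epsilon}=\exp(\epsilon R_i/2)/\sum_{j=1}^n\exp(\epsilon R_j/2)$ (the probability that the exponential mechanism $\mathscr{A}_\epsilon$ selects $i$, given the scores) and $\gamma(\epsilon)=E\{Z_{i,\epsilon}\mid A_i=0,Y_i=1\}-E\{Z_{i,\epsilon}\mid A_i=1,Y_i=1\}$. Let $N_{\max}=|\{i: R_i=\max_j R_j\}|$ and $Z_i=0$ if $R_i\neq\max_jR_j$, $Z_i=1/N_{\max}$ otherwise; $E\{Z_i\}$ is the probability that the algorithm $\mathscr{A}$ selecting uniformly among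 individuals with the highest score selects $i$. The limit $\lim_{\epsilon\to+\infty}\gamma(\epsilon)$ exists and equals the stated difference of conditional expectations of $Z_i$. *)

From HB Require Import structures.
From mathcomp Require Import all_boot all_order all_algebra.
From mathcomp Require Import all_classical all_reals all_analysis.
Set Implicit Arguments. Unset Strict Implicit. Unset Printing Implicit Defensive.
Import Order.TTheory GRing.Theory Num.Theory.
Local Open Scope classical_set_scope.
Local Open Scope ring_scope.

Definition iid_family (R : realType) {dO} {Omega : measurableType dO}
  {dT} {T : measurableType dT} (P : probability Omega R) (n : nat)
  (V : 'I_n -> Omega -> T) : Prop :=
  (forall j, measurable_fun setT (V j)) /\
  (forall B : 'I_n -> set T, (forall j, measurable (B j)) ->
     fine (P (\bigcap_(j in [set: 'I_n]) (V j @^-1` B j)))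
     = \prod_(j < n) fine (P (V j @^-1` B j))) /\
  (forall j k (B : set T), measurable B ->
     P (V j @^-1` B) = P (V k @^-1` B)).

Definition cond_exp (R : realType) {dO} {Omega : measurableType dO}
  (P : probability Omega R) (W : Omega -> R) (B : set Omega) : R :=
  fine (\int[P]_(w in B) (W w)%:E) / fine (P B).

Definition Zeps (R : realType) {Omega : Type} (n : nat)
  (Rs : 'I_n -> Omega -> R) (eps : R) (i : 'I_n) (w : Omega) : R :=
  expR (eps * Rs i w / 2) / \sum_(j < n) expR (eps * Rs j w / 2).

(* Selection probability of the non-private algorithm choosing uniformly
   among the individuals with the highest score. *)
Definition is_top (R : realType) {Omega : Type} (n : nat)
  (Rs : 'I_n -> Omega -> R) (w : Omega) (i : 'I_n) : bool :=
  [forall k, Rs k w <= Rs i w].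

Definition Zmax (R : realType) {Omega : Type} (n : nat)
  (Rs : 'I_n -> Omega -> R) (i : 'I_n) (w : Omega) : R :=
  if is_top Rs w i then (#|[set j | is_top Rs w j]|%:R)^-1 else 0.

Definition grp {Omega : Type} {n : nat} (A Y : 'I_n -> Omega -> bool)
  (i : 'I_n) (a : bool) : set Omega :=
  [set w | A i w = a /\ Y i w = true].

(* gamma(eps) = E{Z_{i,eps} | A_i=0,Y_i=1} - E{Z_{i,eps} | A_i=1,Y_i=1}
   (A_i = 0 is encoded as false, A_i = 1 as true). *)
Definition gamma (R : realType) {dO} {Omega : measurableType dO}
  (P : probability Omega R) (n : nat) (Rs : 'I_n -> Omega -> R)
  (A Y : 'I_n -> Omega -> bool) (i : 'I_n) (eps : R) : R :=
  cond_exp P (Zeps Rs eps i) (grp A Y i false)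
  - cond_exp P (Zeps Rs eps i) (grp A Y i true).

Definition gamma_inf (R : realType) {dO} {Omega : measurableType dO}
  (P : probability Omega R) (n : nat) (Rs : 'I_n -> Omega -> R)
  (A Y : 'I_n -> Omega -> bool) (i : 'I_n) : R :=
  cond_exp P (Zmax Rs i) (grp A Y i false)
  - cond_exp P (Zmax Rs i) (grp A Y i true).

From HB Require Import structures.
From mathcomp Require Import all_boot all_order all_algebra.
From mathcomp Require Import all_classical all_reals all_analysis.
From mathcomp Require Import ring lra.
Import Order.TTheory GRing.Theory Num.Theory.
Local Open Scope classical_set_scope.
Local Open Scope ring_scope.

(* Scores lie in [0, 1], so every weight exp(eps R_j / 2) lies in [1, E] with
   E = exp(eps / 2); hence Z_{i,eps} lies in [1/(nE), E/n] whatever the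
   outcome, and so do both conditional expectations defining gamma(eps).
   Therefore |gamma(eps)| <= E/n - 1/(nE) <= E^2 - 1 = exp(eps) - 1, which is
   below |gamma_inf| as soon as eps < ln(1 + |gamma_inf|). *)

Lemma cond_exp_bounds {R : realType} {dO} {Omega : measurableType dO}
    (P : probability Omega R) (W : Omega -> R) (B : set Omega) (lo hi : R) :
  measurable B -> (0 < P B)%E -> measurable_fun B W ->
  0 <= lo -> (forall w, lo <= W w <= hi) ->
  lo <= cond_exp P W B <= hi.
Proof.
move=> mB PB_gt0 mW lo_ge0 W_bnd.
have W_ge0 w : 0 <= W w by case/andP: (W_bnd w) => lo_W _; apply: le_trans lo_W.
have PB_fin : P B \is a fin_num.
  by rewrite ge0_fin_numE // (le_lt_trans (probability_le1 P mB)) ?ltry.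
have int_ge : (lo%:E * P B <= \int[P]_(w in B) (W w)%:E)%E.
  rewrite -(integral_cst P mB lo%:E).
  apply: ge0_le_integral => //; first exact/measurable_realfun.measurable_EFinP.
  by move=> w _; rewrite lee_fin; case/andP: (W_bnd w).
have int_le : (\int[P]_(w in B) (W w)%:E <= hi%:E * P B)%E.
  rewrite -(integral_cst P mB hi%:E).
  apply: ge0_le_integral => //.
  - by move=> w _; rewrite lee_fin W_ge0.
  - exact/measurable_realfun.measurable_EFinP.
  - by move=> w _; rewrite lee_fin; case/andP: (W_bnd w).
have int_fin : (\int[P]_(w in B) (W w)%:E)%E \is a fin_num.
  rewrite fin_numE; apply/andP; split; apply/negP => /eqP int_inf.
  - by move: int_ge; rewrite int_inf leeNy_eq -(fineK PB_fin) -EFinM.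
  - by move: int_le; rewrite int_inf leye_eq -(fineK PB_fin) -EFinM.
have PB_pos : 0 < fine (P B) by rewrite -lte_fin fineK.
move: int_ge int_le; rewrite -(fineK PB_fin) -(fineK int_fin) -!EFinM !lee_fin.
by move=> int_ge int_le; rewrite /cond_exp ler_pdivlMr // ler_pdivrMr // int_ge.
Qed.

Lemma ratio_sum_bounds {R : realFieldType} {n : nat} (x : 'I_n -> R) (E : R)
    (i : 'I_n) :
  (forall j, 1 <= x j <= E) -> (n%:R * E)^-1 <= x i / \sum_j x j <= E / n%:R.
Proof.
move=> x_bnd; have /andP[xi_ge1 xi_leE] := x_bnd i.
have n_ge1 : 1 <= n%:R :> R by rewrite ler1n; apply: leq_ltn_trans (ltn_ord i).
have sum_ge : n%:R <= \sum_j x j.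
  rewrite -[n in n%:R]card_ord -sumr_const.
  by apply: ler_sum => j _; case/andP: (x_bnd j).
have sum_le : \sum_j x j <= n%:R * E.
  rewrite mulr_natl -[n in E *+ n]card_ord -sumr_const.
  by apply: ler_sum => j _; case/andP: (x_bnd j).
have sum_gt0 : 0 < \sum_j x j by apply: lt_le_trans sum_ge; lra.
have E_ge1 : 1 <= E by lra.
apply/andP; split.
  by rewrite ler_pdivlMr // ler_pdivrMl; nra.
by rewrite ler_pdivrMr // mulrAC ler_pdivlMr; nra.
Qed.

Lemma Zeps_bounds {R : realType} {Omega : Type} {n : nat}
    (Rs : 'I_n -> Omega -> R) (eps : R) (i : 'I_n) (w : Omega) :
  0 <= eps -> (forall j, 0 <= Rs j w <= 1) ->
  (n%:R * expR (eps / 2))^-1 <= Zeps Rs eps i w <= expR (eps / 2) / n%:R.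
Proof.
move=> eps_ge0 Rs_bnd; apply: ratio_sum_bounds => j.
have /andP[Rs_ge0 Rs_le1] := Rs_bnd j.
by rewrite -[X in X <= _ <= _]expR0 !ler_expR; apply/andP; split; nra.
Qed.

Lemma measurable_Zeps {R : realType} {dO} {Omega : measurableType dO} {n : nat}
    (Rs : 'I_n -> Omega -> R) (eps : R) (i : 'I_n) :
  (forall j, measurable_fun setT (Rs j)) -> measurable_fun setT (Zeps Rs eps i).
Proof.
move=> mRs.
have mweight j : measurable_fun setT (fun w => expR (eps * Rs j w / 2)).
  apply: measurableT_comp (@measurable_realfun.measurable_expR R) _.
  apply: measurable_realfun.measurable_funM (measurable_cst _).
  exact: measurable_realfun.measurable_funM (measurable_cst _) (mRs j).
have sum_gt0 w : 0 < \sum_j expR (eps * Rs j w / 2).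
  rewrite (bigD1 i) //= ltr_pwDl ?expR_gt0 //.
  by apply: sumr_ge0 => j _; exact: expR_ge0.
(* the library has no measurability lemma for [x^-1]; on positive reals it
   is [expR (- ln x)] *)
rewrite (_ : Zeps Rs eps i = fun w => expR (eps * Rs i w / 2) *
    expR (- ln (\sum_j expR (eps * Rs j w / 2)))).
  apply: measurable_realfun.measurable_funM (mweight i) _.
  apply: measurableT_comp (@measurable_realfun.measurable_expR R) _.
  apply: measurableT_comp (@measurable_realfun.oppr_measurable R _) _.
  apply: measurableT_comp (@measurable_realfun.measurable_ln R) _.
  exact: measurable_sum.
by apply/funext => w; rewrite /Zeps expRN lnK // posrE.
Qed.

Lemma measurable_grp {dO} {Omega : measurableType dO} {n : nat}
    (A Y : 'I_n -> Omega -> bool) (i : 'I_n) (a : bool) :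
  measurable_fun setT (A i) -> measurable_fun setT (Y i) ->
  measurable (grp A Y i a).
Proof.
move=> mA mY.
rewrite (_ : grp A Y i a = A i @^-1` [set a] `&` Y i @^-1` [set true]) //.
by apply: measurableI; rewrite -[_ @^-1` _]setTI; [apply: mA | apply: mY].
Qed.

Lemma normB_le_interval {R : realDomainType} (lo hi a b : R) :
  lo <= a <= hi -> lo <= b <= hi -> `|a - b| <= hi - lo.
Proof. by move=> /andP[? ?] /andP[? ?]; rewrite ler_norml; apply/andP; split; lra. Qed.

Lemma ratio_sum_bounds_gap_le {R : realFieldType} (n : nat) (E : R) :
  (0 < n)%N -> 1 <= E -> E / n%:R - (n%:R * E)^-1 <= E ^+ 2 - 1.
Proof.
move=> n_gt0 E_ge1; have n_ge1 : 1 <= n%:R :> R by rewrite ler1n.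
have -> : E / n%:R - (n%:R * E)^-1 = (E ^+ 2 - 1) / (n%:R * E).
  by field; apply/andP; split; apply/eqP; lra.
rewrite ler_pdivrMr; last by nra.
by rewrite ler_peMr //; nra.
Qed.

Lemma norm_gamma_le {R : realType} {dO} {Omega : measurableType dO}
    (P : probability Omega R) {n : nat} (Rs : 'I_n -> Omega -> R)
    (A Y : 'I_n -> Omega -> bool) (i : 'I_n) (eps : R) :
  (forall j, measurable_fun setT (Rs j)) -> (forall j w, 0 <= Rs j w <= 1) ->
  (forall a, measurable (grp A Y i a)) -> (forall a, (0 < P (grp A Y i a))%E) ->
  0 <= eps -> `|gamma P Rs A Y i eps| <= expR eps - 1.
Proof.
move=> mRs Rs_bnd mgrp grp_gt0 eps_ge0.
set E := expR (eps / 2).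
have E_ge1 : 1 <= E by rewrite -expR0 ler_expR; lra.
have cond_bnd a : (n%:R * E)^-1 <= cond_exp P (Zeps Rs eps i) (grp A Y i a)
    <= E / n%:R.
  apply: cond_exp_bounds => //.
  - by apply: measurable_funTS; apply: measurable_Zeps.
  - by rewrite invr_ge0 mulr_ge0 ?ler0n //; lra.
  - by move=> w; apply: Zeps_bounds => // j; apply: Rs_bnd.
rewrite (_ : expR eps = E ^+ 2); last by rewrite -expRM_natr; congr expR; lra.
have n_gt0 : (0 < n)%N := leq_ltn_trans (leq0n i) (ltn_ord i).
apply: le_trans _ (ratio_sum_bounds_gap_le n E n_gt0 E_ge1).
exact: normB_le_interval (cond_bnd false) (cond_bnd true).
Qed.

Theorem theorem3 (R : realType) (dO : measure_display)
  (Omega : measurableType dO) (P : probability Omega R)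
  (dX : measure_display) (Xsp : measurableType dX)
  (n : nat) (X : 'I_n -> Omega -> Xsp) (A Y : 'I_n -> Omega -> bool)
  (r : Xsp -> R) (i : 'I_n) :
  measurable_fun setT r ->
  finite_set (range r) ->
  (forall x, 0 <= r x <= 1) ->
  iid_family P (fun j w => (X j w, A j w, Y j w)) ->
  (forall a : bool, (0 < P (grp A Y i a))%E) ->
  let Rs := fun j w => r (X j w) in
  gamma_inf P Rs A Y i != 0 ->
  exists2 eps_hat : R, 0 < eps_hat &
    forall eps : R, 0 < eps < eps_hat ->
      `|gamma P Rs A Y i eps| < `|gamma_inf P Rs A Y i|.
Proof.
move=> mr _ r01 [mXAY _] grp_gt0 Rs gamma_inf_neq0.
have mXA j := measurableT_comp measurable_fst (mXAY j).
have mRs j : measurable_fun setT (Rs j).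
  exact: measurableT_comp mr (measurableT_comp measurable_fst (mXA j)).
have mgrp a : measurable (grp A Y i a).
  apply: measurable_grp; first exact: measurableT_comp measurable_snd (mXA i).
  exact: measurableT_comp measurable_snd (mXAY i).
set g := `|gamma_inf P Rs A Y i|.
have g_gt0 : 0 < g by rewrite normr_gt0.
exists (ln (1 + g)); first by apply: ln_gt0; lra.
move=> eps /andP[eps_gt0 eps_lt].
have expR_lt : expR eps < 1 + g by rewrite -[X in _ < X]lnK ?ltr_expR // posrE; lra.
have Rs_bnd j w : 0 <= Rs j w <= 1 by apply: r01.
apply: le_lt_trans (norm_gamma_le P Rs A Y i eps mRs Rs_bnd mgrp grp_gt0 _) _.
  exact: ltW.
by rewrite ltrBlDl.
Qed.
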